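(* Let $t(z),d(z)\in\mathbb{C}[[z]]$ be such that $t^2-4d$ has a simple zero at $z=0$, and let $A_0(z)\in\mathfrak{gl}_2(\mathbb{C}[[z]])$ satisfy $\operatorname{tr}A_0=t$, $\det A_0=d$. Then (1) $A_0(z)$ is a regular element of $\mathfrak{gl}_2(\mathbb{C}[[z]])$; (2) if $B(z)\in\mathfrak{gl}_2(\mathbb{C}((z)))$ satisfies $[B,A_0]=0$ and $\frac{dB}{dz}\in\mathfrak{gl}_2(\mathbb{C}[[z]])+[A_0,\mathfrak{gl}_2(\mathbb{C}((z)))]$, then $B(z)\in\mathfrak{gl}_2(\mathbb{C}[[z]])$. *)

From HB Require Import structures.
From mathcomp Require Import all_boot all_order all_algebra.
From mathcomp Require Import reals.
From mathcomp Require Import complex.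
Set Implicit Arguments. Unset Strict Implicit. Unset Printing Implicit Defensive.
Import Order.TTheory GRing.Theory Num.Theory.
Local Open Scope ring_scope.

Section Series.
Variable C : comNzRingType.

Definition pser := nat -> C.
(* an element of gl_2(C[[z]]) : sequence of 2x2 coefficient matrices,
   A(z) = \sum_k A k z^k *)
Definition mpser := nat -> 'M[C]_2.

Definition smul (f g : pser) : pser :=
  fun k => \sum_(i < k.+1) f i * g (k - i)%N.

Definition mentry (A : mpser) (i j : 'I_2) : pser := fun k => A k i j.
Definition mtrace (A : mpser) : pser := fun k => \tr (A k).
Definition mdet (A : mpser) : pser :=
  fun k => smul (mentry A ord0 ord0) (mentry A ord_max ord_max) k
         - smul (mentry A ord0 ord_max) (mentry A ord_max ord0) k.

(* an element of gl_2(C((z))) : z^{-lval} * \sum_k lcoef k z^k *)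
Record mlaur := MLaur { lval : nat; lcoef : nat -> 'M[C]_2 }.

Definition lcoeff (B : mlaur) (n : int) : 'M[C]_2 :=
  if (0 <= n + (lval B)%:Z)%R then lcoef B (absz (n + (lval B)%:Z)) else 0.

Definition leq_ (B1 B2 : mlaur) : Prop := forall n : int, lcoeff B1 n = lcoeff B2 n.

Definition of_mpser (A : mpser) : mlaur := MLaur 0 A.
Definition is_mpser (B : mlaur) : Prop := forall n : int, (n < 0)%R -> lcoeff B n = 0.

Definition laddm (B1 B2 : mlaur) : mlaur :=
  MLaur (lval B1 + lval B2)
        (fun k => lcoeff B1 (k%:Z - (lval B1 + lval B2)%:Z)
                + lcoeff B2 (k%:Z - (lval B1 + lval B2)%:Z)).

Definition lbrl (A : mpser) (X : mlaur) : mlaur :=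
  MLaur (lval X) (fun k => \sum_(i < k.+1)
          (A i *m lcoef X (k - i)%N - lcoef X (k - i)%N *m A i)).

Definition lbrr (B : mlaur) (A : mpser) : mlaur :=
  MLaur (lval B) (fun k => \sum_(i < k.+1)
          (lcoef B (k - i)%N *m A i - A i *m lcoef B (k - i)%N)).

(* d/dz on gl_2(C((z))) : coefficient of z^n in dB/dz is (n+1) B_{n+1} *)
Definition lderiv (B : mlaur) : mlaur :=
  MLaur (lval B).+1 (fun k => lcoef B k *~ (k%:Z - (lval B)%:Z)).

End Series.

Definition regular_mx (F : fieldType) (M : 'M[F]_2) : Prop :=
  mxminpoly M = char_poly M.

Definition regular_mpser (F : fieldType) (A : mpser F) : Prop :=
  regular_mx (A 0%N).

From HB Require Import structures.
From mathcomp Require Import all_boot all_order all_algebra.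
From mathcomp Require Import reals complex.
From mathcomp Require Import zify ring.
Import Order.TTheory GRing.Theory Num.Theory.
Local Open Scope ring_scope.

(* Let N := 2 A0(0) - tr A0(0).  Then N^2 = (t^2 - 4d)(0) = 0, while
   (t^2 - 4d)'(0) = 2 tr (N A0'(0)) <> 0; hence N <> 0, A0(0) is not scalar, and a
   non-scalar 2x2 matrix is regular.
   If B had a pole, let b z^v (v < 0) be its lowest term and b1 the next
   coefficient.  The centraliser of the non-scalar A0(0) is spanned by 1 and A0(0),
   and [B, A0] = 0 at orders v and v + 1 puts b and b1 - c A0'(0) in it, where
   b = a + c A0(0).  At negative orders dB/dz lies in [A0, gl_2(C((z)))], so it is
   traceless there and, since tr ([A0, X] A0) = 0, orthogonal to A0 for the pairing
   (U, V) |-> tr (U V).  These conditions at orders v - 1 and v give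
   (2v + 1) c tr (N A0'(0)) = 0, so c = 0, then a = 0 and b = 0. *)

Lemma eq_sub_multiple {R : comNzRingType} {x y u v : R} (k : R) :
  u = v -> x - y = k * (u - v) -> x = y.
Proof. by move=> uv e; apply/eqP; rewrite -subr_eq0 e uv subrr mulr0. Qed.

Lemma ord2_cases (i : 'I_2) : i = ord0 \/ i = ord_max.
Proof. by case: i => [[|[|k]] Hk]; [left|right|by []]; exact/val_inj. Qed.

Lemma big_ord2 (V : nmodType) (f : 'I_2 -> V) :
  \sum_(j < 2) f j = f ord0 + f ord_max.
Proof. by rewrite big_ord_recr big_ord1; congr (f _ + _); exact: val_inj. Qed.

Section Matrix2.
Variable R : comNzRingType.
Implicit Types M N : 'M[R]_2.

Lemma eq_mx2 M N :
  M ord0 ord0 = N ord0 ord0 -> M ord0 ord_max = N ord0 ord_max ->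
  M ord_max ord0 = N ord_max ord0 -> M ord_max ord_max = N ord_max ord_max ->
  M = N.
Proof.
move=> e00 e01 e10 e11; apply/matrixP => i j.
by case: (ord2_cases i) => ->; case: (ord2_cases j) => ->.
Qed.

Lemma mulmx2E M N i j :
  (M *m N) i j = M i ord0 * N ord0 j + M i ord_max * N ord_max j.
Proof. by rewrite mxE big_ord2. Qed.

Lemma mxtrace2E M : \tr M = M ord0 ord0 + M ord_max ord_max.
Proof. exact: big_ord2. Qed.

Lemma mxtrace_mulz M N (z : int) : \tr ((M *~ z) *m N) = \tr (M *m N) * z%:~R.
Proof. by rewrite -scaler_int -scalemxAl mxtraceZ mulrC. Qed.

End Matrix2.

(* The commutation Y M = M Y, entrywise, for M = [[p, q], [r, s]] and
   Y = [[w, x], [y, z]]. *)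
Lemma comm2_solve {F : fieldType} (p q r s w x y z : F) :
  x * r = q * y -> q * (w - z) = x * (p - s) -> r * (w - z) = y * (p - s) ->
  [|| q != 0, r != 0 | p - s != 0] ->
  exists a c, [/\ w = a + c * p, x = c * q, y = c * r & z = a + c * s].
Proof.
move=> e1 e2 e3; have [q0|nq] /= := eqVneq q 0; last first.
  exists (w - x / q * p), (x / q); split; try by field.
    by apply: (eq_sub_multiple (- q^-1) e1); field.
  by apply: (eq_sub_multiple (- q^-1) e2); field.
have [r0|nr] /= := eqVneq r 0; last first.
  exists (w - y / r * p), (y / r); split; try by field.
    by apply: (eq_sub_multiple r^-1 e1); rewrite q0; field.
  by apply: (eq_sub_multiple (- r^-1) e3); field.
move=> ps; exists (w - (w - z) / (p - s) * p), ((w - z) / (p - s)).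
split; try by field.
  by apply: (eq_sub_multiple (- (p - s)^-1) e2); rewrite q0; field.
by apply: (eq_sub_multiple (- (p - s)^-1) e3); rewrite r0; field.
Qed.

Lemma comm_nonscalar_mx2 {F : fieldType} {M Y : 'M[F]_2} :
  ~~ is_scalar_mx M -> Y *m M = M *m Y -> exists a c, Y = a%:M + c *: M.
Proof.
move=> nsM YM; have E i j : (Y *m M) i j = (M *m Y) i j by rewrite YM.
case: (comm2_solve (M ord0 ord0) (M ord0 ord_max)
  (M ord_max ord0) (M ord_max ord_max) (Y ord0 ord0) (Y ord0 ord_max)
  (Y ord_max ord0) (Y ord_max ord_max)) => [||||a [c [e00 e01 e10 e11]]].
- by apply: (eq_sub_multiple 1 (E ord0 ord0)); rewrite !mulmx2E; ring.
- by apply: (eq_sub_multiple 1 (E ord0 ord_max)); rewrite !mulmx2E; ring.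
- by apply: (eq_sub_multiple (-1) (E ord_max ord0)); rewrite !mulmx2E; ring.
- apply: contraNT nsM; rewrite !negb_or !negbK subr_eq0.
  case/and3P => /eqP q0 /eqP r0 /eqP ps; apply/is_scalar_mxP.
  by exists (M ord0 ord0); apply: eq_mx2; rewrite !mxE /= ?mulr1n.
by exists a, c; apply: eq_mx2; rewrite !mxE /= ?mulr1n ?mulr0n ?add0r.
Qed.

Lemma regular_mx2 (F : fieldType) (M : 'M[F]_2) :
  ~~ is_scalar_mx M -> regular_mx M.
Proof.
move=> nsM; have deg2 : degree_mxminpoly M = 2%N.
  have := mxminpoly_linear_is_scalar M; rewrite (negbTE nsM).
  have /dvdp_leq : char_poly M != 0 by rewrite -size_poly_eq0 size_char_poly.
  move=> /(_ _ (mxminpoly_dvd_char M)); rewrite size_mxminpoly size_char_poly.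
  lia.
apply/eqP; rewrite -eqp_monic ?mxminpoly_monic ?char_poly_monic //.
by rewrite -dvdp_size_eqp ?mxminpoly_dvd_char // size_mxminpoly deg2 size_char_poly.
Qed.

Definition trfree {R : pzRingType} (M : 'M[R]_2) := M *+ 2 - (\tr M)%:M.

Lemma trfree_scalar (R : comNzRingType) (a : R) : trfree a%:M = 0.
Proof. by rewrite /trfree mxtrace_scalar raddfMn subrr. Qed.

Lemma trfree_mxtrace_nonscalar {R : comNzRingType} {M N : 'M[R]_2} :
  \tr (trfree M *m N) != 0 -> ~~ is_scalar_mx M.
Proof.
by apply: contraNN => /is_scalar_mxP [a ->]; rewrite trfree_scalar mul0mx mxtrace0.
Qed.

Section Discriminant.
Variables (C : comNzRingType) (A : mpser C).

Lemma trfree_sqr :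
  trfree (A 0%N) *m trfree (A 0%N) =
  (smul (mtrace A) (mtrace A) 0 - 4%:R * mdet A 0)%:M.
Proof.
rewrite /mdet /smul /mtrace /mentry !big_ord1 /= subnn !mxtrace2E.
by apply: eq_mx2; rewrite /trfree !mulmx2E !(mxE, mulmxnE, mxtrace2E) /=; ring.
Qed.

Lemma disc_coef1 :
  smul (mtrace A) (mtrace A) 1 - 4%:R * mdet A 1 =
  2%:R * \tr (trfree (A 0%N) *m A 1%N).
Proof.
rewrite /mdet /smul /mtrace /mentry !big_ord2 /= subn0 subnn !mxtrace2E.
by rewrite /trfree !mulmx2E !(mxE, mulmxnE, mxtrace2E) /=; ring.
Qed.

End Discriminant.

(* b, b1 are the coefficients of z^v, z^(v+1) of B; the hypotheses are
   [B, A0] = 0 at orders v, v + 1, tr (dB/dz) = 0 at orders v - 1, v, and the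
   vanishing of the order-v coefficient of tr (dB/dz A0). *)
Lemma lowest_coef_eq0 {F : numFieldType} {M A1 b b1 : 'M[F]_2} {v : int} :
  trfree M *m trfree M = 0 -> \tr (trfree M *m A1) != 0 ->
  b *m M = M *m b ->
  b1 *m M - M *m b1 + (b *m A1 - A1 *m b) = 0 ->
  \tr b = 0 -> \tr b1 * (v + 1)%:~R = 0 ->
  \tr (b1 *m M) * (v + 1)%:~R + \tr (b *m A1) * v%:~R = 0 ->
  b = 0.
Proof.
move=> NN trNA1 bM b1M trb trb1 pairing.
have nsM := trfree_mxtrace_nonscalar trNA1.
have [a [c eb]] := comm_nonscalar_mx2 nsM bM.
have [a' [c' eY]] : exists a' c', b1 - c *: A1 = a'%:M + c' *: M.
  apply: comm_nonscalar_mx2 nsM _; apply/eqP; rewrite -subr_eq0 -b1M eb.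
  apply/eqP/matrixP => i j; rewrite !(mxE, big_ord2).
  by case: (ord2_cases i) => ->; case: (ord2_cases j) => -> /=; ring.
have eb1 : b1 = a'%:M + c' *: M + c *: A1 by rewrite -eY subrK.
have c0 : c * \tr (trfree M *m A1) * (2 * v + 1)%:~R = 0.
  have D0 : (trfree M *m trfree M) ord0 ord0 = 0 by rewrite NN mxE.
  have -> : c * \tr (trfree M *m A1) * (2 * v + 1)%:~R =
      2%:R * (\tr (b1 *m M) * (v + 1)%:~R + \tr (b *m A1) * v%:~R)
      - \tr M * (\tr b1 * (v + 1)%:~R)
      - (v + 1)%:~R * c' * (trfree M *m trfree M) ord0 ord0
      - v%:~R * \tr A1 * \tr b.
    rewrite eb1 eb /trfree !mxtrace2E !mulmx2E !(mxE, mulmxnE, mxtrace2E) /=.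
    by ring.
  by rewrite pairing trb1 D0 trb; ring.
have odd_neq0 : (2 * v + 1)%:~R != 0 :> F by rewrite intr_eq0; lia.
move: c0 => /eqP; rewrite !mulf_eq0 (negbTE trNA1) (negbTE odd_neq0) !orbF.
move=> /eqP c0.
move: trb; rewrite eb c0 scale0r addr0 mxtrace_scalar => /eqP.
by rewrite mulrn_eq0 /= => /eqP ->; rewrite raddf0.
Qed.

Lemma big_ord_trunc {V : nmodType} {m n : nat} (F : nat -> V) :
  (forall i, (minn m n <= i)%N -> F i = 0) ->
  \sum_(i < m) F i = \sum_(i < n) F i.
Proof.
wlog mn : m n / (m <= n)%N => [wlog_mn F0|F0].
  case: (leqP m n) => [|/ltnW] h; first exact: wlog_mn.
  by symmetry; apply: wlog_mn => // i; rewrite minnC; apply: F0.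
rewrite (big_ord_widen n F mn) big_mkcond /=; apply: eq_bigr => i _.
by case: ltnP => // hi; rewrite F0 // (minn_idPl mn).
Qed.

Section LaurentCoefficients.
Variable C : comNzRingType.
Implicit Types (A P : mpser C) (B X : mlaur C).

Lemma lcoeff_neg B n : n + (lval B)%:Z < 0 -> lcoeff B n = 0.
Proof. by rewrite /lcoeff => h; rewrite ifF //; lia. Qed.

Lemma lcoeff_nat B (k : nat) : lcoeff B (k%:Z - (lval B)%:Z) = lcoef B k.
Proof. by rewrite /lcoeff ifT; [congr (lcoef B _)|]; lia. Qed.

Lemma lcoeff0 n : lcoeff (of_mpser (fun _ => 0 : 'M[C]_2)) n = 0.
Proof. by rewrite /lcoeff; case: ifP. Qed.

Lemma lcoeff_of_mpser_neg P n : n < 0 -> lcoeff (of_mpser P) n = 0.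
Proof. by move=> n0; apply: lcoeff_neg; rewrite addr0. Qed.

Lemma lcoeff_laddm B1 B2 n :
  lcoeff (laddm B1 B2) n = lcoeff B1 n + lcoeff B2 n.
Proof.
rewrite [LHS]/lcoeff /=; case: ifP => h; last by rewrite !lcoeff_neg ?addr0 //; lia.
by congr (lcoeff _ _ + lcoeff _ _); lia.
Qed.

Lemma lcoeff_lderiv B n : lcoeff (lderiv B) n = lcoeff B (n + 1) *~ (n + 1).
Proof.
rewrite [LHS]/lcoeff /=; case: ifP => h; last by rewrite lcoeff_neg ?mul0rz //; lia.
have -> : n + 1 = (absz (n + (lval B).+1%:Z))%:Z - (lval B)%:Z by lia.
by rewrite lcoeff_nat.
Qed.

(* Both [lbrl A] and [lbrr ^~ A] are of this form. *)
Definition lconv (g : nat -> 'M[C]_2 -> 'M[C]_2) X : mlaur C :=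
  MLaur (lval X) (fun k => \sum_(i < k.+1) g i (lcoef X (k - i)%N)).

Lemma lcoeff_lconv g X n K :
  (forall i, g i 0 = 0) -> (forall i, (K <= i)%N -> lcoeff X (n - i%:Z) = 0) ->
  lcoeff (lconv g X) n = \sum_(i < K) g i (lcoeff X (n - i%:Z)).
Proof.
move=> g0 XK; rewrite [LHS]/lcoeff /=; case: ifP => h; last first.
  by rewrite big1 // => i _; rewrite lcoeff_neg ?g0 //; lia.
rewrite [LHS](eq_bigr (fun i : 'I_ _ => g i (lcoeff X (n - i%:Z)))) => [|i _];
  last first.
  rewrite /lcoeff ifT; first by congr (g _ (lcoef X _)); move: (ltn_ord i); lia.
  by move: (ltn_ord i); lia.
apply: (big_ord_trunc (fun i => g i (lcoeff X (n - i%:Z)))) => i.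
rewrite geq_min => hi.
have [/XK -> //|iK] := leqP K i; rewrite lcoeff_neg ?g0 //.
by move: hi iK; lia.
Qed.

Lemma lcoeff_lbrl A X n K :
  (forall i, (K <= i)%N -> lcoeff X (n - i%:Z) = 0) ->
  lcoeff (lbrl A X) n =
  \sum_(i < K) (A i *m lcoeff X (n - i%:Z) - lcoeff X (n - i%:Z) *m A i).
Proof.
apply: (lcoeff_lconv (fun i M => A i *m M - M *m A i)) => i.
by rewrite mulmx0 mul0mx subrr.
Qed.

Lemma lcoeff_lbrr B A n K :
  (forall i, (K <= i)%N -> lcoeff B (n - i%:Z) = 0) ->
  lcoeff (lbrr B A) n =
  \sum_(i < K) (lcoeff B (n - i%:Z) *m A i - A i *m lcoeff B (n - i%:Z)).
Proof.
apply: (lcoeff_lconv (fun i M => M *m A i - A i *m M)) => i.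
by rewrite mulmx0 mul0mx subrr.
Qed.

Lemma mxtrace_lbrl A X n : \tr (lcoeff (lbrl A X) n) = 0.
Proof.
rewrite (@lcoeff_lbrl _ _ _ (absz (n + (lval X)%:Z)).+1) => [|i hi]; last first.
  by apply: lcoeff_neg; lia.
by rewrite raddf_sum big1 // => i _; rewrite raddfB /= mxtrace_mulC subrr.
Qed.

Lemma mxtrace_lbrl_mul A X n K : n + (lval X)%:Z < K%:Z ->
  \sum_(i < K) \tr (lcoeff (lbrl A X) (n - i%:Z) *m A i) = 0.
Proof.
move=> nK; pose Y i j := lcoeff X (n - i%:Z - j%:Z).
have YC i j : Y i j = Y j i by rewrite /Y -!addrA [- _ + _]addrC.
pose f i j := \tr (Y i j *m A i *m A j).
(* tr (A j Y A i) = tr (Y A i A j): the double sum is antisymmetric in (i, j). *)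
transitivity (\sum_(i < K) \sum_(j < K) (f i j - f j i)).
  apply: eq_bigr => i _; rewrite (@lcoeff_lbrl _ _ _ K) => [|j jK]; last first.
    by apply: lcoeff_neg; lia.
  rewrite mulmx_suml raddf_sum; apply: eq_bigr => j _.
  rewrite /= mulmxBl raddfB /= /f; congr (_ - _).
    by rewrite -[in LHS]mulmxA [LHS]mxtrace_mulC.
  by rewrite -(YC i j).
by under eq_bigr do rewrite sumrB; rewrite sumrB exchange_big subrr.
Qed.

Lemma is_mpser_ind B :
  (forall v, v < 0 -> (forall n, n < v -> lcoeff B n = 0) -> lcoeff B v = 0) ->
  is_mpser B.
Proof.
move=> step; suff low m n : n < 0 -> n < m%:Z - (lval B)%:Z -> lcoeff B n = 0.
  by move=> n n0; apply: (low (lval B)) => //; lia.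
elim: m n => [|m IH] n n0 nm; first by apply: lcoeff_neg; lia.
have [/IH|mn] := ltrP n (m%:Z - (lval B)%:Z); first exact.
have -> : n = m%:Z - (lval B)%:Z by lia.
by apply: step => [|k km]; [lia | apply: IH => //; lia].
Qed.

End LaurentCoefficients.

Section PoleStep.
Context {F : numFieldType} {A P : mpser F} {B X : mlaur F}.
Hypotheses (NN : trfree (A 0%N) *m trfree (A 0%N) = 0)
           (trNA1 : \tr (trfree (A 0%N) *m A 1%N) != 0).
Hypothesis BA : leq_ (lbrr B A) (of_mpser (fun _ => 0)).
Hypothesis dB : leq_ (lderiv B) (laddm (of_mpser P) (lbrl A X)).

Lemma lcoeff_lderiv_pole n : n < 0 ->
  lcoeff B (n + 1) *~ (n + 1) = lcoeff (lbrl A X) n.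
Proof.
by move=> n0; rewrite -lcoeff_lderiv dB lcoeff_laddm lcoeff_of_mpser_neg ?add0r.
Qed.

Lemma lowest_pole_coef_eq0 v :
  v < 0 -> (forall n, n < v -> lcoeff B n = 0) -> lcoeff B v = 0.
Proof.
move=> v0 low; set b := lcoeff B v; set b1 := lcoeff B (v + 1).
have bA : b *m A 0%N = A 0%N *m b.
  have := BA v; rewrite lcoeff0 (@lcoeff_lbrr _ _ _ _ 1) => [|i i1].
    by rewrite big_ord1 subr0 => /eqP; rewrite subr_eq0 => /eqP.
  by apply: low; lia.
have b1A : b1 *m A 0%N - A 0%N *m b1 + (b *m A 1%N - A 1%N *m b) = 0.
  have := BA (v + 1); rewrite lcoeff0 (@lcoeff_lbrr _ _ _ _ 2) => [|i i2].
    by rewrite big_ord2 /= subr0 addrK.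
  by apply: low; lia.
have trb : \tr b = 0.
  have := lcoeff_lderiv_pole (v - 1) ltac:(lia).
  rewrite subrK => /(congr1 mxtrace); rewrite mxtrace_lbrl raddfMz => /eqP.
  by rewrite mulrz_eq0 => /orP [/eqP v0'|/eqP //]; lia.
have trb1 : \tr b1 * (v + 1)%:~R = 0.
  have := lcoeff_lderiv_pole v v0.
  by move=> /(congr1 mxtrace); rewrite mxtrace_lbrl raddfMz -mulrzr.
have pairing : \tr (b1 *m A 0%N) * (v + 1)%:~R + \tr (b *m A 1%N) * v%:~R = 0.
  rewrite -(@mxtrace_lbrl_mul _ A X v (lval X).+2) ?ltz_nat; last by lia.
  pose g (i : nat) := \tr (lcoeff B (v - i%:Z + 1) *m A i) * (v - i%:Z + 1)%:~R.
  rewrite (eq_bigr (fun i : 'I_ _ => g i)) => [|i _]; last first.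
    by rewrite -lcoeff_lderiv_pole ?mxtrace_mulz //; lia.
  rewrite (big_ord_trunc g (n := 2)) => [|i]; last first.
    by rewrite /g geq_min => i2; rewrite low ?mul0mx ?mxtrace0 ?mul0r //; lia.
  by rewrite big_ord2 /g /= subr0 subrK.
exact: lowest_coef_eq0 NN trNA1 bA b1A trb trb1 pairing.
Qed.

End PoleStep.

Local Open Scope complex_scope.

Theorem lemma4p1 (R : realType) (t d : pser R[i]) (A0 : mpser R[i]) :
  (* t^2 - 4d has a simple zero at z = 0 *)
  (smul t t 0%N - 4%:R * d 0%N = 0) ->
  (smul t t 1%N - 4%:R * d 1%N != 0) ->
  (* tr A0 = t, det A0 = d *)
  (forall k, mtrace A0 k = t k) ->
  (forall k, mdet A0 k = d k) ->
  regular_mpser A0 /\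
  (forall B : mlaur R[i],
     leq_ (lbrr B A0) (of_mpser (fun _ => 0)) ->
     (exists (P : mpser R[i]) (X : mlaur R[i]),
         leq_ (lderiv B) (laddm (of_mpser P) (lbrl A0 X))) ->
     is_mpser B).
Proof.
move=> disc0 disc1 trA0 detA0.
have trE k : smul t t k = smul (mtrace A0) (mtrace A0) k.
  by apply: eq_bigr => i _; rewrite !trA0.
have NN : trfree (A0 0%N) *m trfree (A0 0%N) = 0.
  by rewrite trfree_sqr -trE detA0 disc0 raddf0.
have trNA1 : \tr (trfree (A0 0%N) *m A0 1%N) != 0.
  apply: contraNneq disc1 => trNA1_0; apply/eqP.
  by rewrite trE -detA0 disc_coef1 trNA1_0 mulr0.
split; first exact/regular_mx2/(trfree_mxtrace_nonscalar trNA1).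
move=> B BA [P [X dB]]; apply: is_mpser_ind.
exact: lowest_pole_coef_eq0 NN trNA1 BA dB.
Qed.
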